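(* Suppose $\lambda$ is a regular cardinal and $S=\langle I\times n,\mathcal{R}\rangle$ is a $\lambda$-system with $n<\omega$ and $|\mathcal{R}|<\omega$. Then $S$ has a cofinal branch.
   Context: Let $\lambda$ be an infinite regular cardinal. A relation $R$ is tree-like if $a<_R c$ and $b<_R c$ imply $a,b$ are $R$-comparable ($a=b$, $a<_Rb$ or $b<_Ra$). A $\lambda$-system $\langle I\times\kappa,\mathcal{R}\rangle$ consists of an unbounded $I\subseteq\lambda$, $0<\kappa<\lambda$, levels $S_\alpha=\{\alpha\}\times\kappa$ for $\alpha\in I$ (with $S$ denoting their union), and a set $\mathcal{R}$ of binary transitive tree-like relations on $S$ with $|\mathcal{R}|<\lambda$, such that $(\alpha_0,\beta_0)<_R(\alpha_1,\beta_1)$ implies $\alpha_0<\alpha_1$, and for all $\alpha_0<\alpha_1$ in $I$ there are $\beta_0,\beta_1<\kappa$ and $R\in\mathcal{R}$ with $(\alpha_0,\beta_0)<_R(\alpha_1,\beta_1)$. A branch through $R$ is a set of pairwise $R$-comparable elements; it is cofinal if it meets $S_\alpha$ for unboundedly many $\alpha\in I$. *)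

From mathcomp Require Import all_boot.

Set Implicit Arguments.
Unset Strict Implicit.
Unset Printing Implicit Defensive.

(* An infinite regular cardinal lambda, represented (up to order isomorphism)
   by a type L with a strict well-order lt whose order type is lambda. *)
Definition ord_le (L : Type) (lt : L -> L -> Prop) (x y : L) : Prop :=
  lt x y \/ x = y.

Definition injective_fun (A B : Type) (f : A -> B) : Prop :=
  forall x y, f x = f y -> x = y.

Definition unbounded (L : Type) (lt : L -> L -> Prop) (A : L -> Prop) : Prop :=
  forall x, exists y, A y /\ ord_le lt x y.

Record infinite_regular_cardinal (L : Type) (lt : L -> L -> Prop) : Prop := {
  irc_wf : well_founded lt;
  irc_trans : forall x y z, lt x y -> lt y z -> lt x z;
  irc_irrefl : forall x, ~ lt x x;
  irc_total : forall x y, lt x y \/ x = y \/ lt y x;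
  irc_infinite : exists f : nat -> L, injective_fun f;
  (* lambda is a cardinal: every proper initial segment has smaller cardinality *)
  irc_initial : forall x, ~ (exists f : L -> L, injective_fun f /\ forall y, lt (f y) x);
  (* lambda is regular: every unbounded subset has cardinality lambda *)
  irc_regular : forall A : L -> Prop, unbounded lt A ->
      exists f : L -> L, injective_fun f /\ forall y, A (f y)
}.

(* A lambda-system <I x kappa, R> with kappa = n, R = {R_k | k < m}
   (a finite family; |R| < lambda is then automatic since lambda is infinite). *)
Definition inS (L : Type) (n : nat) (I : L -> Prop) (a : L * 'I_n) : Prop := I a.1.

Record lambda_system (L : Type) (lt : L -> L -> Prop) (I : L -> Prop)
    (n m : nat) (R : 'I_m -> L * 'I_n -> L * 'I_n -> Prop) : Prop := {
  ls_unbounded : unbounded lt I;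
  ls_kappa_pos : 0 < n;
  ls_trans : forall k a b c, inS I a -> inS I b -> inS I c ->
      R k a b -> R k b c -> R k a c;
  ls_treelike : forall k a b c, inS I a -> inS I b -> inS I c ->
      R k a c -> R k b c -> a = b \/ R k a b \/ R k b a;
  ls_levels : forall k a b, inS I a -> inS I b -> R k a b -> lt a.1 b.1;
  ls_linked : forall a0 a1, I a0 -> I a1 -> lt a0 a1 ->
      exists (b0 b1 : 'I_n) (k : 'I_m), R k (a0, b0) (a1, b1)
}.

Definition branch (L : Type) (n : nat) (I : L -> Prop)
    (Rk : L * 'I_n -> L * 'I_n -> Prop) (B : L * 'I_n -> Prop) : Prop :=
  (forall a, B a -> inS I a) /\
  (forall a b, B a -> B b -> a = b \/ Rk a b \/ Rk b a).

Definition cofinal (L : Type) (lt : L -> L -> Prop) (n : nat) (I : L -> Prop)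
    (B : L * 'I_n -> Prop) : Prop :=
  unbounded lt (fun alpha => I alpha /\ exists beta : 'I_n, B (alpha, beta)).

(** The order type of [lt] has no largest element, so the tails [{y in I | x < y}]
   generate a proper filter; extend it to an ultrafilter [G].  For each
   [a in I], the [G]-large tail above [a] is covered by the finitely many sets
   [{b | (a, b0) <_k (b, b1)}], so one triple [(b0, k, b1)] is [G]-large for [a];
   by finiteness again a single triple [t] works for a [G]-large set [A] of [a].
   The points [(a, b0)], [a in A], form an [R_k]-branch: any two of them lie
   below a common [(c, b1)], and tree-likeness makes them comparable.  Being
   [G]-large, [A] meets every tail, so the branch is cofinal. *)

From mathcomp Require Import all_boot.
From mathcomp Require Import boolp classical_sets filter.

Set Implicit Arguments.
Unset Strict Implicit.
Unset Printing Implicit Defensive.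

Local Open Scope classical_set_scope.

(* A largest [M] would make [{M}] unbounded, and regularity would then inject
   the infinite [L] into a singleton. *)
Lemma regular_cardinal_no_max (L : Type) (lt : L -> L -> Prop) :
  infinite_regular_cardinal lt -> forall x, exists y, lt x y.
Proof.
move=> H M; apply: contrapT => M_max.
have M_unbounded : unbounded lt (eq^~ M).
  move=> x; exists M; split=> //.
  case: (irc_total H x M) => [|[]]; [by left | by right |].
  by move=> lt_M_x; case: M_max; exists x.
have [f [f_inj fM]] := irc_regular H M_unbounded.
have [g g_inj] := irc_infinite H.
by have /g_inj := f_inj _ _ (etrans (fM (g 0)) (esym (fM (g 1)))).
Qed.

Lemma ultra_exists_finType (X : Type) (T : finType) (G : set_system X)
    (P : T -> set X) :
  UltraFilter G -> G (fun x => exists t, P t x) -> exists t, G (P t).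
Proof.
move=> UG GP; apply: contrapT => noP.
have GnP t : G (~` P t).
  by case: (in_ultra_setVsetC (P t) UG) => // GPt; case: noP; exists t.
have GnoP : G (fun x => forall t, (~` P t) x) by apply: filter_forall.
apply: (filter_not_empty G).
by apply: filterS (filterI GP GnoP) => x [[t Pt] /(_ t)].
Qed.

Section TailUltrafilter.

Variables (L : Type) (lt : L -> L -> Prop) (I : set L) (x0 : L).
Hypothesis lt_trans : forall x y z, lt x y -> lt y z -> lt x z.
Hypothesis lt_total : forall x y, lt x y \/ x = y \/ lt y x.
Hypothesis lt_no_max : forall x, exists y, lt x y.
Hypothesis I_unbounded : unbounded lt I.

Definition tail (x : L) : set L := [set y | I y /\ lt x y].

Lemma tail_ProperFilter : ProperFilter (filter_from setT tail).
Proof.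
apply: filter_from_proper; last first.
  move=> x _; have [z xz] := lt_no_max x.
  have [y [Iy zy]] := I_unbounded z; exists y; split => //.
  by case: zy => [|<-] //; exact: lt_trans.
apply: filter_fromT_filter; first by exists x0.
move=> x y; case: (lt_total x y) => [xy|[<-|yx]].
- by exists y => z [Iz yz]; do !split => //; exact: lt_trans xy yz.
- by exists x.
- by exists x => z [Iz xz]; do !split => //; exact: lt_trans yx xz.
Qed.

Lemma tail_ultrafilter : exists G, UltraFilter G /\ forall x, G (tail x).
Proof.
have [G [UG tailG]] := ultraFilterLemma tail_ProperFilter.
by exists G; split => // x; apply: tailG; exists x.
Qed.

End TailUltrafilter.

Section UltrafilterBranch.

Variables (L : Type) (lt : L -> L -> Prop) (I : set L).
Variables (n m : nat) (R : 'I_m -> L * 'I_n -> L * 'I_n -> Prop).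
Hypothesis S : lambda_system lt I R.
Variable G : set_system L.
Hypothesis UG : UltraFilter G.
Hypothesis G_tail : forall x, G (tail lt I x).

Let GI : G I.
Proof.
have [x _] := filter_ex (filterT : G setT).
by apply: filterS (G_tail x) => y [].
Qed.

Definition link_set (a : L) (t : 'I_n * 'I_m * 'I_n) : set L :=
  [set b | R t.1.2 (a, t.1.1) (b, t.2)].

Lemma large_link_set : exists t, G [set a | I a /\ G (link_set a t)].
Proof.
apply: (ultra_exists_finType (P := fun t => [set a | I a /\ G (link_set a t)])).
apply: filterS GI => a Ia.
suff [t Gt] : exists t, G (link_set a t) by exists t.
apply: ultra_exists_finType; apply: filterS (G_tail a) => b [Ib ab].
by have [b0 [b1 [k abR]]] := ls_linked S Ia Ib ab; exists (b0, k, b1).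
Qed.

Lemma ultra_unbounded (A : set L) : G A -> unbounded lt (A `&` I).
Proof.
move=> GA x; have [y [Ay [Iy xy]]] := filter_ex (filterI GA (G_tail x)).
by exists y; split; [split | left].
Qed.

Lemma ultrafilter_branch :
  exists (k : 'I_m) (B : L * 'I_n -> Prop), branch I (R k) B /\ cofinal lt I B.
Proof.
have [[[b0 k] b1] GA] := large_link_set.
pose B p := p.2 = b0 /\ I p.1 /\ G (link_set p.1 (b0, k, b1)).
exists k, B; split.
  split=> [p [_ []] //|[a _] [c _] [/= -> [Ia Ga]] [/= -> [Ic Gc]]].
  have [y [[ay cy] Iy]] := filter_ex (filterI (filterI Ga Gc) GI).
  exact: (ls_treelike S (c := (y, b1))).
move=> x; have [y [[[Iy Gy] _] xy]] := ultra_unbounded GA x.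
by exists y; split=> //; split=> //; exists b0.
Qed.

End UltrafilterBranch.

Theorem mainTheorem7 (L : Type) (lt : L -> L -> Prop) (I : L -> Prop)
    (n m : nat) (R : 'I_m -> L * 'I_n -> L * 'I_n -> Prop) :
  infinite_regular_cardinal lt ->
  lambda_system lt I R ->
  exists (k : 'I_m) (B : L * 'I_n -> Prop), branch I (R k) B /\ cofinal lt I B.
Proof.
move=> H S.
have [f _] := irc_infinite H.
have [G [UG G_tail]] := tail_ultrafilter (f 0) (irc_trans H) (irc_total H)
  (regular_cardinal_no_max H) (ls_unbounded S).
exact: (ultrafilter_branch S UG G_tail).
Qed.
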